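(* Let $G>0$, $T>0$, and let $F\colon\mathbb R\to\mathbb R$ be continuous and $T$-periodic. Then the equation \[ \ddot x=\left(G\sqrt{1-x^2}-\frac{\dot x^2}{1-x^2}\right)x-(1-x^2)F(t) \] has a $T$-periodic solution $x\colon\mathbb R\to(-1,1)$. *)

From Stdlib Require Import Reals.
From Coquelicot Require Import Coquelicot.
Open Scope R_scope.

From Stdlib Require Import Reals Lra Lia.
From Coquelicot Require Import Coquelicot.
Open Scope R_scope.

(* Writing x = sin th, so that 1 - x^2 = cos^2 th, the equation becomes
   th'' = G sin th - F(t) cos th  with |th| < PI/2.
   For M >= G + |F|, f(t, th) = M th - (G sin th - F(t) cos th) is nondecreasing in th, and the
   equation reads th = K f(., th) with K = (M - d^2/dt^2)^-1 on T-periodic functions, a positive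
   operator with K 1 = 1/M.  Since f(t, -PI/2) = G - M PI/2 and f(t, PI/2) = M PI/2 - G, K f(., th)
   takes values in [-PI/2 + G/M, PI/2 - G/M] whenever |th| <= PI/2: the constants -PI/2 and PI/2
   are strict lower and upper solutions.  The iterates th_0 = -PI/2, th_(n+1) = K f(., th_n)
   therefore increase, stay in that interval and are equi-Lipschitz, so they converge locally
   uniformly to a fixed point th with |th| < PI/2, and x = sin th is the periodic solution. *)

Definition periodic (T : R) (f : R -> R) : Prop := forall t, f (t + T) = f t.

Definition lipschitz (L : R) (f : R -> R) : Prop :=
  forall a b, Rabs (f a - f b) <= L * Rabs (a - b).

Lemma is_derive_eq (f : R -> R) (x l1 l2 : R) : is_derive f x l1 -> l1 = l2 -> is_derive f x l2.
Proof. now intros H <-. Qed.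

Lemma periodic_sub T (f : R -> R) t : periodic T f -> f (t - T) = f t.
Proof. intros hf. rewrite <- (hf (t - T)). f_equal. ring. Qed.

Lemma periodic_IZR T (f : R -> R) : periodic T f -> forall (z : Z) t, f (t + IZR z * T) = f t.
Proof.
  intros hf z. induction z as [|z IH|z IH] using Z.peano_ind; intros t.
  - f_equal. ring.
  - rewrite succ_IZR, <- (IH t), <- (hf (t + IZR z * T)). f_equal. ring.
  - rewrite <- (IH t), <- Z.sub_1_r, minus_IZR, <- (hf (t + (IZR z - 1) * T)). f_equal. ring.
Qed.

Lemma continuous_periodic_bounded T (f : R -> R) :
  0 < T -> (forall t, continuous f t) -> periodic T f -> exists B, forall t, Rabs (f t) <= B.
Proof.
  intros hT hc hf.
  assert (hc' : forall t, continuity_pt f t) by (intros; apply continuity_pt_filterlim, hc).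
  destruct (continuity_ab_maj f 0 T) as [tmax [hmax _]]; [lra | intros; apply hc' |].
  destruct (continuity_ab_maj (fun t => - f t) 0 T) as [tmin [hmin _]];
    [lra | intros; now apply continuity_pt_opp |].
  exists (Rmax (f tmax) (- f tmin)). intros t.
  destruct (floor_ex (t / T)) as [z hz].
  assert (ht0 : 0 <= t - IZR z * T <= T).
  { assert (IZR z * T <= t / T * T < (IZR z + 1) * T) by (split; nra).
    replace (t / T * T) with t in * by (field; lra). lra. }
  replace t with (t - IZR z * T + IZR z * T) at 1 by ring.
  rewrite (periodic_IZR T f hf).
  specialize (hmax _ ht0); specialize (hmin _ ht0).
  pose proof (Rmax_l (f tmax) (- f tmin)). pose proof (Rmax_r (f tmax) (- f tmin)).
  apply Rabs_le. lra.
Qed.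

Lemma lipschitz_of_derive_bound (f df : R -> R) L :
  (forall x, is_derive f x (df x)) -> (forall x, Rabs (df x) <= L) -> lipschitz L f.
Proof.
  intros hd hb a b.
  destruct (MVT_gen f b a df) as [c [_ ->]].
  - intros; apply hd.
  - intros x _. apply continuity_pt_filterlim.
    apply (ex_derive_continuous (K := R_AbsRing) (V := R_NormedModule)). eexists; apply hd.
  - rewrite Rabs_mult. apply Rmult_le_compat_r; [apply Rabs_pos | apply hb].
Qed.

Lemma lipschitz_continuous L (f : R -> R) x : lipschitz L f -> continuous f x.
Proof.
  intros hf. apply continuity_pt_filterlim. intros eps heps.
  set (delta := eps / (Rabs L + 1)). pose proof (Rabs_pos L).
  assert (hdelta : (Rabs L + 1) * delta = eps) by (unfold delta; field; lra).
  exists delta. split; [unfold delta; apply Rdiv_lt_0_compat; lra |].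
  intros y [_ hy]. simpl in *. unfold R_dist in *.
  eapply Rle_lt_trans; [apply hf |].
  pose proof (Rabs_pos (y - x)). pose proof (RRle_abs L). nra.
Qed.

Lemma Un_cv_le (u : nat -> R) l c : Un_cv u l -> (forall n, u n <= c) -> l <= c.
Proof.
  intros hu hc. apply is_lim_seq_Reals in hu.
  exact (is_lim_seq_le u (fun _ => c) l c hc hu (is_lim_seq_const c)).
Qed.

Lemma lipschitz_Un_cv (u : nat -> R -> R) (l : R -> R) L :
  (forall s, Un_cv (fun n => u n s) (l s)) -> (forall n, lipschitz L (u n)) -> lipschitz L l.
Proof.
  intros hcv hu a b. apply (Un_cv_le (fun n => Rabs (u n a - u n b))); [| intros; apply hu].
  apply cv_cvabs, CV_minus; apply hcv.
Qed.

Lemma Un_cv_finite (u : nat -> nat -> R) (l : nat -> R) m eps : 0 < eps ->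
  (forall j, Un_cv (fun n => u n j) (l j)) ->
  exists N, forall n j, (N <= n)%nat -> (j <= m)%nat -> Rabs (u n j - l j) < eps.
Proof.
  intros heps hcv. induction m as [|m [N1 hN1]].
  - destruct (hcv 0%nat eps heps) as [N hN]. exists N. intros n j hn hj.
    replace j with 0%nat by lia. apply hN; lia.
  - destruct (hcv (S m) eps heps) as [N2 hN2]. exists (max N1 N2). intros n j hn hj.
    destruct (Nat.eq_dec j (S m)) as [-> | hne]; [apply hN2 | apply hN1]; lia.
Qed.

(* Equi-Lipschitz: convergence at the finitely many points of a grid of mesh [d] controls the
   whole interval. *)
Lemma lipschitz_Un_cv_uniform (u : nat -> R -> R) (l : R -> R) L lo hi eps : 0 < eps ->
  (forall s, Un_cv (fun n => u n s) (l s)) -> (forall n, lipschitz L (u n)) -> lipschitz L l ->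
  exists N, forall n s, (N <= n)%nat -> lo <= s <= hi -> Rabs (u n s - l s) <= eps.
Proof.
  intros heps hcv hu hl. pose proof (Rabs_pos L) as hL.
  set (d := eps / (3 * (Rabs L + 1))).
  assert (hd : 0 < d) by (apply Rdiv_lt_0_compat; lra).
  assert (hLd : Rabs L * d <= eps / 3).
  { unfold d. apply Rmult_le_reg_r with (3 * (Rabs L + 1)); [lra|]. field_simplify; lra. }
  set (grid j := lo + INR j * d).
  destruct (INR_unbounded ((hi - lo) / d)) as [m hm].
  destruct (Un_cv_finite (fun n j => u n (grid j)) (fun j => l (grid j)) m (eps / 3)) as [N hN];
    [lra | intros; apply hcv |].
  exists N. intros n s hn hs.
  destruct (nfloor_ex ((s - lo) / d)) as [j hj]; [apply Rdiv_le_0_compat; lra |].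
  assert (hgrid : 0 <= s - grid j <= d).
  { unfold grid. assert (INR j * d <= (s - lo) / d * d < (INR j + 1) * d) by (split; nra).
    replace ((s - lo) / d * d) with (s - lo) in * by (field; lra). lra. }
  assert (hjm : (j <= m)%nat).
  { apply INR_le.
    assert ((s - lo) / d <= (hi - lo) / d)
      by (apply Rmult_le_compat_r; [apply Rlt_le, Rinv_0_lt_compat |]; lra).
    lra. }
  specialize (hN n j hn hjm).
  assert (hun : Rabs (u n s - u n (grid j)) <= eps / 3).
  { eapply Rle_trans; [apply hu|]. rewrite (Rabs_pos_eq (s - grid j)) by lra.
    pose proof (RRle_abs L). nra. }
  assert (hlj : Rabs (l (grid j) - l s) <= eps / 3).
  { eapply Rle_trans; [apply hl|]. rewrite Rabs_minus_sym, (Rabs_pos_eq (s - grid j)) by lra.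
    pose proof (RRle_abs L). nra. }
  replace (u n s - l s)
    with ((u n s - u n (grid j)) + (u n (grid j) - l (grid j)) + (l (grid j) - l s)) by ring.
  pose proof (Rabs_triang (u n s - u n (grid j) + (u n (grid j) - l (grid j))) (l (grid j) - l s)).
  pose proof (Rabs_triang (u n s - u n (grid j)) (u n (grid j) - l (grid j))).
  lra.
Qed.

Definition exp_RInt (a : R) (h : R -> R) (lo hi : R) : R :=
  RInt (fun s => exp (a * s) * h s) lo hi.

Section ExpRInt.
Variables (a : R) (h : R -> R).
Hypothesis hc : forall s, continuous h s.

Lemma continuous_exp_mult s : continuous (fun s => exp (a * s) * h s) s.
Proof.
  apply (continuous_mult (fun s => exp (a * s)) h); [| apply hc].
  apply (ex_derive_continuous (K := R_AbsRing) (V := R_NormedModule)). auto_derive; auto.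
Qed.

Lemma ex_RInt_exp_mult lo hi : ex_RInt (fun s => exp (a * s) * h s) lo hi.
Proof.
  apply (ex_RInt_continuous (V := R_CompleteNormedModule)). intros; apply continuous_exp_mult.
Qed.

Lemma exp_RInt_Chasles lo hi : exp_RInt a h lo hi = exp_RInt a h 0 hi - exp_RInt a h 0 lo.
Proof.
  unfold exp_RInt.
  rewrite <- (RInt_Chasles (V := R_CompleteNormedModule) _ 0 lo hi) by apply ex_RInt_exp_mult.
  symmetry; apply Rplus_minus_l.
Qed.

Lemma is_derive_exp_RInt t : is_derive (exp_RInt a h 0) t (exp (a * t) * h t).
Proof.
  apply (is_derive_RInt (V := R_CompleteNormedModule)
           (fun s => exp (a * s) * h s) (exp_RInt a h 0) 0 t); [| apply continuous_exp_mult].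
  apply filter_forall. intros b. apply RInt_correct, ex_RInt_exp_mult.
Qed.

Lemma exp_RInt_shift T lo hi : periodic T h ->
  exp_RInt a h (lo + T) (hi + T) = exp (a * T) * exp_RInt a h lo hi.
Proof.
  intros hp. unfold exp_RInt.
  rewrite <- (RInt_scal (V := R_CompleteNormedModule)) by apply ex_RInt_exp_mult.
  replace (lo + T) with (1 * lo + T) by ring. replace (hi + T) with (1 * hi + T) by ring.
  rewrite <- (RInt_comp_lin (V := R_CompleteNormedModule)) by apply ex_RInt_exp_mult.
  apply RInt_ext. intros s _. unfold scal; simpl; unfold mult; simpl.
  replace (1 * s) with s by ring. rewrite hp, Rmult_plus_distr_l, exp_plus. ring.
Qed.

End ExpRInt.

Lemma exp_RInt_minus a (h g : R -> R) lo hi :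
  (forall s, continuous h s) -> (forall s, continuous g s) ->
  exp_RInt a h lo hi - exp_RInt a g lo hi = exp_RInt a (fun s => h s - g s) lo hi.
Proof.
  intros hc gc. unfold exp_RInt.
  rewrite <- (RInt_minus (V := R_CompleteNormedModule)) by (apply ex_RInt_exp_mult; auto).
  apply RInt_ext. intros. unfold minus, plus, opp; simpl. ring.
Qed.

Lemma exp_RInt_le a (h g : R -> R) lo hi :
  (forall s, continuous h s) -> (forall s, continuous g s) -> lo <= hi ->
  (forall s, lo <= s <= hi -> h s <= g s) -> exp_RInt a h lo hi <= exp_RInt a g lo hi.
Proof.
  intros hc gc hlo hle. apply RInt_le; try (apply ex_RInt_exp_mult; auto); auto.
  intros s hs. apply Rmult_le_compat_l; [apply Rlt_le, exp_pos | apply hle; lra].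
Qed.

Lemma exp_RInt_const a c lo hi : a <> 0 ->
  exp_RInt a (fun _ => c) lo hi = c * (exp (a * hi) - exp (a * lo)) / a.
Proof.
  intros ha. unfold exp_RInt. apply is_RInt_unique.
  replace (c * (exp (a * hi) - exp (a * lo)) / a)
    with (minus (c * exp (a * hi) / a) (c * exp (a * lo) / a))
    by (unfold minus, plus, opp; simpl; field; auto).
  apply (is_RInt_derive (fun s => c * exp (a * s) / a)).
  - intros s _. auto_derive; [auto | field; auto].
  - intros s _. apply (continuous_exp_mult a (fun _ => c)). intros; apply continuous_const.
Qed.

Lemma exp_RInt_abs_le a (h : R -> R) H lo hi :
  a <> 0 -> (forall s, continuous h s) -> lo <= hi ->
  (forall s, lo <= s <= hi -> Rabs (h s) <= H) ->
  Rabs (exp_RInt a h lo hi) <= H * (exp (a * hi) - exp (a * lo)) / a.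
Proof.
  intros ha hc hlo hb. apply Rabs_le.
  replace (- (H * (exp (a * hi) - exp (a * lo)) / a))
    with ((- H) * (exp (a * hi) - exp (a * lo)) / a) by (field; auto).
  rewrite <- !exp_RInt_const by auto.
  split; apply exp_RInt_le; auto; try (intros; apply continuous_const);
    intros s hs; specialize (hb s hs); apply Rabs_le_between in hb; lra.
Qed.

Ltac exp_expand :=
  unfold Rminus;
  repeat rewrite ?Rmult_plus_distr_l, ?Ropp_plus_distr, ?Ropp_mult_distr_l_reverse,
    ?Ropp_mult_distr_r_reverse, ?exp_plus, ?exp_Ropp.

Ltac split_conj := repeat match goal with |- _ /\ _ => split end; try exact I.

Ltac exp_nonzero := repeat split; first [apply Rgt_not_eq, exp_pos | lra].

Section Green.
Variables k T : R.
Hypotheses (hk : 0 < k) (hT : 0 < T).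

(* For T-periodic [h], [green h t] is the integral of e^(-k|t-s|) h(s) / (2k) over the whole line,
   the periodic solution u of u'' = k^2 u - h: each half-line folds onto one period, the
   geometric series over the periods giving the factor 1 / (1 - e^(-kT)) in [green_norm]. *)
Definition green_left (h : R -> R) t := exp (- (k * t)) * exp_RInt k h (t - T) t.
Definition green_right (h : R -> R) t := exp (k * t) * exp_RInt (- k) h t (t + T).
Definition green_norm := / (2 * k * (1 - exp (- (k * T)))).
Definition green h t := green_norm * (green_left h t + green_right h t).
Definition green_deriv h t := green_norm * k * (green_right h t - green_left h t).

Lemma one_sub_exp_pos : 0 < 1 - exp (- (k * T)).
Proof.
  rewrite <- exp_0 at 1. enough (exp (- (k * T)) < exp 0) by lra.
  apply exp_increasing. pose proof (Rmult_lt_0_compat k T hk hT). lra.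
Qed.

Lemma green_norm_pos : 0 < green_norm.
Proof. pose proof one_sub_exp_pos. apply Rinv_0_lt_compat, Rmult_lt_0_compat; lra. Qed.

Lemma green_left_const c t : green_left (fun _ => c) t = c * (1 - exp (- (k * T))) / k.
Proof.
  unfold green_left. rewrite exp_RInt_const by lra. exp_expand.
  field; exp_nonzero.
Qed.

Lemma green_right_const c t : green_right (fun _ => c) t = c * (1 - exp (- (k * T))) / k.
Proof.
  unfold green_right. rewrite exp_RInt_const by lra. exp_expand.
  field; exp_nonzero.
Qed.

Lemma green_const c t : green (fun _ => c) t = c / (k * k).
Proof.
  pose proof one_sub_exp_pos. unfold green, green_norm.
  rewrite green_left_const, green_right_const. field. lra.
Qed.

Lemma green_left_abs_le h H t : (forall s, continuous h s) ->
  (forall s, t - T <= s <= t -> Rabs (h s) <= H) ->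
  Rabs (green_left h t) <= H * (1 - exp (- (k * T))) / k.
Proof.
  intros hc hb. rewrite <- (green_left_const H t). unfold green_left.
  rewrite Rabs_mult, Rabs_pos_eq, exp_RInt_const by (apply Rlt_le, exp_pos || lra).
  apply Rmult_le_compat_l; [apply Rlt_le, exp_pos |].
  apply exp_RInt_abs_le; auto; lra.
Qed.

Lemma green_right_abs_le h H t : (forall s, continuous h s) ->
  (forall s, t <= s <= t + T -> Rabs (h s) <= H) ->
  Rabs (green_right h t) <= H * (1 - exp (- (k * T))) / k.
Proof.
  intros hc hb. rewrite <- (green_right_const H t). unfold green_right.
  rewrite Rabs_mult, Rabs_pos_eq, exp_RInt_const by (apply Rlt_le, exp_pos || lra).
  apply Rmult_le_compat_l; [apply Rlt_le, exp_pos |].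
  apply exp_RInt_abs_le; auto; lra.
Qed.

Lemma green_abs_le h H t : (forall s, continuous h s) ->
  (forall s, t - T <= s <= t + T -> Rabs (h s) <= H) -> Rabs (green h t) <= H / (k * k).
Proof.
  intros hc hb. pose proof green_norm_pos.
  rewrite <- (green_const H t). unfold green.
  rewrite Rabs_mult, Rabs_pos_eq, green_left_const, green_right_const by lra.
  apply Rmult_le_compat_l; [lra |].
  eapply Rle_trans; [apply Rabs_triang |].
  apply Rplus_le_compat; [apply green_left_abs_le | apply green_right_abs_le]; auto;
    intros; apply hb; lra.
Qed.

Lemma green_deriv_abs_le h H t : (forall s, continuous h s) ->
  (forall s, t - T <= s <= t + T -> Rabs (h s) <= H) -> Rabs (green_deriv h t) <= H / k.
Proof.
  intros hc hb. pose proof green_norm_pos. pose proof one_sub_exp_pos.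
  unfold green_deriv. rewrite Rabs_mult, Rabs_pos_eq by nra.
  apply Rle_trans with (green_norm * k * (2 * (H * (1 - exp (- (k * T))) / k))).
  - apply Rmult_le_compat_l; [nra |].
    eapply Rle_trans; [apply Rabs_triang |]. rewrite Rabs_Ropp.
    replace (2 * _) with (H * (1 - exp (- (k * T))) / k + H * (1 - exp (- (k * T))) / k) by ring.
    apply Rplus_le_compat; [apply green_right_abs_le | apply green_left_abs_le]; auto;
      intros; apply hb; lra.
  - right. unfold green_norm. field. lra.
Qed.

Lemma green_le h1 h2 t : (forall s, continuous h1 s) -> (forall s, continuous h2 s) ->
  (forall s, t - T <= s <= t + T -> h1 s <= h2 s) -> green h1 t <= green h2 t.
Proof.
  intros hc1 hc2 hle. pose proof green_norm_pos.
  unfold green, green_left, green_right.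
  apply Rmult_le_compat_l; [lra |].
  apply Rplus_le_compat; apply Rmult_le_compat_l; try apply Rlt_le, exp_pos;
    apply exp_RInt_le; auto; try lra; intros; apply hle; lra.
Qed.

Lemma green_minus h1 h2 t : (forall s, continuous h1 s) -> (forall s, continuous h2 s) ->
  green h1 t - green h2 t = green (fun s => h1 s - h2 s) t.
Proof.
  intros hc1 hc2. unfold green, green_left, green_right.
  rewrite <- !exp_RInt_minus by auto. ring.
Qed.

Section PeriodicSource.
Variable h : R -> R.
Hypotheses (hc : forall s, continuous h s) (hp : periodic T h).

Lemma green_periodic : periodic T (green h).
Proof.
  intros t. unfold green, green_left, green_right.
  replace (t + T - T) with (t - T + T) by ring.
  rewrite !exp_RInt_shift by auto. exp_expand. field; exp_nonzero.
Qed.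

Lemma is_derive_green_left t :
  is_derive (green_left h) t (- k * green_left h t + (1 - exp (- (k * T))) * h t).
Proof.
  apply is_derive_ext
    with (fun t => exp (- (k * t)) * (exp_RInt k h 0 t - exp_RInt k h 0 (t - T))).
  { intros s. unfold green_left. now rewrite (exp_RInt_Chasles k h hc (s - T) s). }
  eapply is_derive_eq.
  { auto_derive; [split_conj; eexists; apply is_derive_exp_RInt; auto | reflexivity]. }
  rewrite !(is_derive_unique _ _ _ (is_derive_exp_RInt _ _ hc _)).
  unfold green_left. change (t + - T) with (t - T).
  rewrite (exp_RInt_Chasles k h hc (t - T) t), (periodic_sub T h t hp).
  exp_expand. field; exp_nonzero.
Qed.

Lemma is_derive_green_right t :
  is_derive (green_right h) t (k * green_right h t - (1 - exp (- (k * T))) * h t).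
Proof.
  apply is_derive_ext
    with (fun t => exp (k * t) * (exp_RInt (- k) h 0 (t + T) - exp_RInt (- k) h 0 t)).
  { intros s. unfold green_right. now rewrite (exp_RInt_Chasles (- k) h hc s (s + T)). }
  eapply is_derive_eq.
  { auto_derive; [split_conj; eexists; apply is_derive_exp_RInt; auto | reflexivity]. }
  rewrite !(is_derive_unique _ _ _ (is_derive_exp_RInt _ _ hc _)).
  unfold green_right. rewrite (exp_RInt_Chasles (- k) h hc t (t + T)), hp.
  exp_expand. field; exp_nonzero.
Qed.

Lemma is_derive_green t : is_derive (green h) t (green_deriv h t).
Proof.
  unfold green. eapply is_derive_eq.
  { auto_derive; [| reflexivity].
    split_conj; [eexists; apply is_derive_green_left | eexists; apply is_derive_green_right]. }
  rewrite (is_derive_unique (fun x : R => green_left h x) _ _ (is_derive_green_left t)),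
    (is_derive_unique (fun x : R => green_right h x) _ _ (is_derive_green_right t)).
  unfold green_deriv. ring.
Qed.

Lemma is_derive_green_deriv t : is_derive (green_deriv h) t (k * k * green h t - h t).
Proof.
  pose proof one_sub_exp_pos. unfold green_deriv. eapply is_derive_eq.
  { auto_derive; [| reflexivity].
    split_conj; [eexists; apply is_derive_green_right | eexists; apply is_derive_green_left]. }
  rewrite (is_derive_unique (fun x : R => green_left h x) _ _ (is_derive_green_left t)),
    (is_derive_unique (fun x : R => green_right h x) _ _ (is_derive_green_right t)).
  unfold green, green_norm. field. lra.
Qed.

End PeriodicSource.
End Green.

Section Pendulum.
Variables (G T M : R) (F : R -> R).
Hypotheses (hG : 0 < G) (hT : 0 < T) (hFc : forall t, continuous F t) (hFp : periodic T F)
  (hM : forall t, G + Rabs (F t) <= M).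

Definition pendulum_rhs t th := G * sin th - F t * cos th.
Definition shifted_rhs t th := M * th - pendulum_rhs t th.

Lemma M_pos : 0 < M.
Proof. pose proof (hM 0). pose proof (Rabs_pos (F 0)). lra. Qed.

Lemma sqrt_M_pos : 0 < sqrt M.
Proof. apply sqrt_lt_R0, M_pos. Qed.

Lemma sqrt_M_sqr : sqrt M * sqrt M = M.
Proof. apply sqrt_sqrt, Rlt_le, M_pos. Qed.

Lemma pendulum_rhs_lipschitz t : lipschitz (G + Rabs (F t)) (pendulum_rhs t).
Proof.
  apply (lipschitz_of_derive_bound _ (fun th => G * cos th + F t * sin th)).
  - intros th. unfold pendulum_rhs. auto_derive; [auto | ring].
  - intros th. eapply Rle_trans; [apply Rabs_triang |].
    rewrite !Rabs_mult, (Rabs_pos_eq G) by lra.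
    assert (Rabs (cos th) <= 1) by (apply Rabs_le, COS_bound).
    assert (Rabs (sin th) <= 1) by (apply Rabs_le, SIN_bound).
    pose proof (Rabs_pos (F t)). nra.
Qed.

Lemma shifted_rhs_le t a b : a <= b -> shifted_rhs t a <= shifted_rhs t b.
Proof.
  intros hab. pose proof (pendulum_rhs_lipschitz t b a) as hl. pose proof (hM t).
  rewrite (Rabs_pos_eq (b - a)) in hl by lra. apply Rabs_le_between in hl.
  unfold shifted_rhs. nra.
Qed.

Lemma shifted_rhs_lipschitz t : lipschitz (2 * M) (shifted_rhs t).
Proof.
  intros a b. pose proof (pendulum_rhs_lipschitz t a b). pose proof (hM t).
  pose proof (Rabs_pos (a - b)). pose proof (Rabs_pos (F t)).
  unfold shifted_rhs.
  replace (M * a - pendulum_rhs t a - (M * b - pendulum_rhs t b))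
    with (M * (a - b) + - (pendulum_rhs t a - pendulum_rhs t b)) by ring.
  eapply Rle_trans; [apply Rabs_triang |].
  rewrite Rabs_Ropp, Rabs_mult, (Rabs_pos_eq M) by lra. nra.
Qed.

Lemma shifted_rhs_abs_le t a : Rabs a <= PI / 2 -> Rabs (shifted_rhs t a) <= M * (PI + 1).
Proof.
  intros ha. pose proof (shifted_rhs_lipschitz t a 0) as hl. pose proof (hM t).
  assert (h0 : shifted_rhs t 0 = F t)
    by (unfold shifted_rhs, pendulum_rhs; rewrite sin_0, cos_0; ring).
  rewrite h0, Rminus_0_r in hl.
  pose proof (Rabs_triang_inv (shifted_rhs t a) (F t)).
  assert (2 * M * Rabs a <= M * PI) by (pose proof M_pos; nra). lra.
Qed.

Lemma continuous_shifted_rhs (th : R -> R) t : (forall s, continuous th s) ->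
  continuous (fun s => shifted_rhs s (th s)) t.
Proof.
  intros hth. unfold shifted_rhs, pendulum_rhs.
  assert (hcomp : forall f : R -> R, (forall x, ex_derive f x) -> continuous (fun s => f (th s)) t).
  { intros f hf. apply (continuous_comp th f); [apply hth |].
    apply (ex_derive_continuous (K := R_AbsRing) (V := R_NormedModule)), hf. }
  apply (continuous_minus (fun s => M * th s) (fun s => G * sin (th s) - F s * cos (th s))).
  - apply (hcomp (fun x => M * x)). intros; auto_derive; auto.
  - apply (continuous_minus (fun s => G * sin (th s)) (fun s => F s * cos (th s))).
    + apply (hcomp (fun x => G * sin x)). intros; auto_derive; auto.
    + apply (continuous_mult F (fun s => cos (th s))); [apply hFc |].
      apply (hcomp cos). intros; auto_derive; auto.
Qed.

Definition admissible (th : R -> R) : Prop :=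
  (forall s, continuous th s) /\ periodic T th /\ (forall s, Rabs (th s) <= PI / 2).

Definition monotone_step (th : R -> R) : R -> R :=
  green (sqrt M) T (fun s => shifted_rhs s (th s)).

Section Step.
Variable th : R -> R.
Hypothesis hth : admissible th.

Let hc : forall s, continuous (fun s => shifted_rhs s (th s)) s.
Proof. intros; apply continuous_shifted_rhs, hth. Qed.

Let hp : periodic T (fun s => shifted_rhs s (th s)).
Proof. intros s. unfold shifted_rhs, pendulum_rhs. now rewrite hFp, (proj1 (proj2 hth)). Qed.

Lemma is_derive_monotone_step t :
  is_derive (monotone_step th) t (green_deriv (sqrt M) T (fun s => shifted_rhs s (th s)) t).
Proof. apply is_derive_green; auto using sqrt_M_pos. Qed.

Lemma is_derive_monotone_step_deriv t :
  is_derive (green_deriv (sqrt M) T (fun s => shifted_rhs s (th s))) t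
    (M * monotone_step th t - shifted_rhs t (th t)).
Proof.
  eapply is_derive_eq; [apply is_derive_green_deriv; auto using sqrt_M_pos |].
  now rewrite sqrt_M_sqr.
Qed.

Lemma monotone_step_lipschitz : lipschitz (M * (PI + 1) / sqrt M) (monotone_step th).
Proof.
  apply (lipschitz_of_derive_bound _ (green_deriv (sqrt M) T (fun s => shifted_rhs s (th s))));
    [apply is_derive_monotone_step | intros t].
  apply green_deriv_abs_le; auto using sqrt_M_pos.
  intros s _. apply shifted_rhs_abs_le, hth.
Qed.

Lemma monotone_step_bounds t : - (PI / 2) + G / M <= monotone_step th t <= PI / 2 - G / M.
Proof.
  pose proof M_pos. pose proof sqrt_M_pos. pose proof PI_RGT_0.
  assert (hcst : forall c, green (sqrt M) T (fun _ => c) t = c / M)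
    by (intros; rewrite green_const, sqrt_M_sqr; auto).
  assert (hbd : forall s, - (PI / 2) <= th s <= PI / 2) by (intros; apply Rabs_le_between, hth).
  split.
  - apply Rle_trans with (green (sqrt M) T (fun _ => shifted_rhs t (- (PI / 2))) t).
    + rewrite hcst. unfold shifted_rhs, pendulum_rhs. rewrite sin_neg, cos_neg, sin_PI2, cos_PI2.
      right; field; lra.
    + apply green_le; auto using continuous_const. intros s _.
      replace (shifted_rhs t (- (PI / 2))) with (shifted_rhs s (- (PI / 2)))
        by (unfold shifted_rhs, pendulum_rhs; rewrite cos_neg, cos_PI2; ring).
      apply shifted_rhs_le, hbd.
  - apply Rle_trans with (green (sqrt M) T (fun _ => shifted_rhs t (PI / 2)) t).
    + apply green_le; auto using continuous_const. intros s _.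
      replace (shifted_rhs t (PI / 2)) with (shifted_rhs s (PI / 2))
        by (unfold shifted_rhs, pendulum_rhs; rewrite cos_PI2; ring).
      apply shifted_rhs_le, hbd.
    + rewrite hcst. unfold shifted_rhs, pendulum_rhs. rewrite sin_PI2, cos_PI2.
      right; field; lra.
Qed.

Lemma monotone_step_admissible : admissible (monotone_step th).
Proof.
  pose proof (Rdiv_lt_0_compat G M hG M_pos).
  split; [| split].
  - intros t. apply (lipschitz_continuous _ _ _ monotone_step_lipschitz).
  - apply green_periodic; auto using sqrt_M_pos.
  - intros t. pose proof (monotone_step_bounds t). apply Rabs_le. lra.
Qed.

End Step.

Lemma monotone_step_le th1 th2 t : admissible th1 -> admissible th2 ->
  (forall s, th1 s <= th2 s) -> monotone_step th1 t <= monotone_step th2 t.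
Proof.
  intros h1 h2 hle. apply green_le; [apply sqrt_M_pos | exact hT | ..].
  - intros; apply continuous_shifted_rhs, h1.
  - intros; apply continuous_shifted_rhs, h2.
  - intros s _. apply shifted_rhs_le, hle.
Qed.

Fixpoint monotone_iter (n : nat) : R -> R :=
  match n with
  | O => fun _ => - (PI / 2)
  | S n => monotone_step (monotone_iter n)
  end.

Lemma monotone_iter_admissible n : admissible (monotone_iter n).
Proof.
  induction n as [|n IH]; [| apply monotone_step_admissible, IH].
  split; [| split]; intros s.
  - apply continuous_const.
  - reflexivity.
  - pose proof PI_RGT_0. simpl. rewrite Rabs_Ropp, Rabs_pos_eq; lra.
Qed.

Lemma monotone_iter_le_succ n t : monotone_iter n t <= monotone_iter (S n) t.
Proof.
  revert t. induction n as [|n IH]; intros t.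
  - pose proof (Rdiv_lt_0_compat G M hG M_pos).
    apply Rle_trans with (- (PI / 2) + G / M); [simpl; lra |].
    apply monotone_step_bounds, (monotone_iter_admissible 0).
  - apply (monotone_step_le (monotone_iter n) (monotone_iter (S n)));
      [apply monotone_iter_admissible .. | exact IH].
Qed.

Lemma monotone_iter_lipschitz n : lipschitz (M * (PI + 1) / sqrt M) (monotone_iter n).
Proof.
  destruct n as [|n]; [| apply monotone_step_lipschitz, monotone_iter_admissible].
  intros a b. simpl. rewrite Rminus_diag, Rabs_R0.
  pose proof M_pos. pose proof sqrt_M_pos. pose proof PI_RGT_0. pose proof (Rabs_pos (a - b)).
  apply Rmult_le_pos; [apply Rdiv_le_0_compat|]; nra.
Qed.

Definition monotone_limit t : R := real (Lim_seq (fun n => monotone_iter n t)).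

Lemma monotone_iter_cv t : Un_cv (fun n => monotone_iter n t) (monotone_limit t).
Proof.
  apply is_lim_seq_Reals. unfold monotone_limit.
  destruct (ex_finite_lim_seq_incr (fun n => monotone_iter n t) (PI / 2)) as [l hl].
  - intros n; apply monotone_iter_le_succ.
  - intros n. apply Rabs_le_between, monotone_iter_admissible.
  - now rewrite (is_lim_seq_unique _ _ hl).
Qed.

Lemma monotone_limit_bounds t : - (PI / 2) + G / M <= monotone_limit t <= PI / 2 - G / M.
Proof.
  split.
  - apply Rle_trans with (monotone_iter 1 t).
    + apply monotone_step_bounds, (monotone_iter_admissible 0).
    + apply (growing_ineq (fun n => monotone_iter n t));
        [intros n; apply monotone_iter_le_succ | apply monotone_iter_cv].
  - apply (Un_cv_le _ _ _ (monotone_iter_cv t)). intros n.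
    eapply Rle_trans; [apply monotone_iter_le_succ |].
    apply monotone_step_bounds, (monotone_iter_admissible n).
Qed.

Lemma monotone_limit_lipschitz : lipschitz (M * (PI + 1) / sqrt M) monotone_limit.
Proof. exact (lipschitz_Un_cv _ _ _ monotone_iter_cv monotone_iter_lipschitz). Qed.

Lemma monotone_limit_admissible : admissible monotone_limit.
Proof.
  pose proof (Rdiv_lt_0_compat G M hG M_pos).
  split; [| split]; intros t.
  - apply (lipschitz_continuous _ _ _ monotone_limit_lipschitz).
  - unfold monotone_limit. f_equal. apply Lim_seq_ext. intros n. apply monotone_iter_admissible.
  - pose proof (monotone_limit_bounds t). apply Rabs_le. lra.
Qed.

(* The iterates converge uniformly on [t - T, t + T], where [monotone_step] reads its argument. *)
Lemma monotone_limit_fixed t : monotone_limit t = monotone_step monotone_limit t.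
Proof.
  pose proof M_pos. pose proof sqrt_M_pos.
  pose proof (fun n => proj1 (monotone_iter_admissible n)) as hic.
  pose proof (proj1 monotone_limit_admissible) as htc.
  apply (UL_sequence (fun n => monotone_iter (S n) t)).
  - intros eps heps. destruct (monotone_iter_cv t eps heps) as [N hN].
    exists N. intros n hn. apply hN. lia.
  - intros eps heps.
    destruct (lipschitz_Un_cv_uniform monotone_iter monotone_limit (M * (PI + 1) / sqrt M)
                (t - T) (t + T) (eps / 4)) as [N hN];
      [lra | apply monotone_iter_cv | apply monotone_iter_lipschitz
       | apply monotone_limit_lipschitz |].
    exists N. intros n hn. unfold Rdist. simpl. unfold monotone_step.
    rewrite green_minus by (intros; apply continuous_shifted_rhs; auto).
    eapply Rle_lt_trans.
    + apply (green_abs_le _ _ sqrt_M_pos hT _ (2 * M * (eps / 4))).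
      * intros. apply (continuous_minus (fun s => shifted_rhs s (monotone_iter n s)));
          apply continuous_shifted_rhs; auto.
      * intros s hs. eapply Rle_trans; [apply shifted_rhs_lipschitz |].
        apply Rmult_le_compat_l; [lra | apply hN; auto].
    + rewrite sqrt_M_sqr. replace (2 * M * (eps / 4) / M) with (eps / 2) by (field; lra).
      lra.
Qed.

Lemma pendulum_periodic_solution : exists th w : R -> R,
  (forall t, - (PI / 2) < th t < PI / 2) /\ periodic T th /\
  (forall t, is_derive th t (w t)) /\
  (forall t, is_derive w t (G * sin (th t) - F t * cos (th t))).
Proof.
  pose proof (Rdiv_lt_0_compat G M hG M_pos).
  exists monotone_limit, (green_deriv (sqrt M) T (fun s => shifted_rhs s (monotone_limit s))).
  split; [| split; [| split]]; [intros t | apply monotone_limit_admissible | intros t | intros t].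
  - pose proof (monotone_limit_bounds t). lra.
  - apply (is_derive_ext (monotone_step monotone_limit));
      [intros; symmetry; apply monotone_limit_fixed |].
    apply is_derive_monotone_step, monotone_limit_admissible.
  - eapply is_derive_eq; [apply is_derive_monotone_step_deriv, monotone_limit_admissible |].
    rewrite <- monotone_limit_fixed. unfold shifted_rhs, pendulum_rhs. ring.
Qed.

End Pendulum.

Lemma is_derive_sin_substitution (G : R) (F th w : R -> R) t : 0 < cos (th t) ->
  is_derive th t (w t) -> is_derive w t (G * sin (th t) - F t * cos (th t)) ->
  is_derive (fun t => cos (th t) * w t) t
    ((G * sqrt (1 - sin (th t) ^ 2) - (cos (th t) * w t) ^ 2 / (1 - sin (th t) ^ 2)) * sin (th t)
     - (1 - sin (th t) ^ 2) * F t).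
Proof.
  intros hcos hth hw.
  assert (hcos2 : 1 - sin (th t) ^ 2 = cos (th t) ^ 2)
    by (pose proof (sin2_cos2 (th t)); unfold Rsqr in *; lra).
  rewrite hcos2, sqrt_pow2 by lra.
  eapply is_derive_eq.
  - apply (is_derive_mult (fun t => cos (th t)) w); [| exact hw | intros; apply Rmult_comm].
    apply (is_derive_comp cos th); [apply is_derive_Reals, derivable_pt_lim_cos | exact hth].
  - unfold plus, mult, scal; simpl; unfold mult; simpl. field. lra.
Qed.

Theorem theorem3p3 (G T : R) (F : R -> R)
  (hG : 0 < G) (hT : 0 < T)
  (hFc : forall t, continuous F t)
  (hFp : forall t, F (t + T) = F t) :
  exists x v : R -> R,
    (forall t, -1 < x t < 1) /\
    (forall t, x (t + T) = x t) /\
    (forall t, is_derive x t (v t)) /\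
    (forall t, is_derive v t
       ((G * sqrt (1 - x t ^ 2) - v t ^ 2 / (1 - x t ^ 2)) * x t
        - (1 - x t ^ 2) * F t)).
Proof.
  destruct (continuous_periodic_bounded T F hT hFc hFp) as [B hB].
  destruct (pendulum_periodic_solution G T (G + B) F hG hT hFc hFp)
    as (th & w & hbd & hper & hth & hw).
  { intros t. pose proof (hB t). lra. }
  assert (hcos : forall t, 0 < cos (th t)) by (intros t; apply cos_gt_0; apply hbd).
  exists (fun t => sin (th t)), (fun t => cos (th t) * w t).
  split; [| split; [| split]]; intros t.
  - pose proof (sin2_cos2 (th t)). pose proof (hcos t). unfold Rsqr in *. split; nra.
  - now rewrite hper.
  - eapply is_derive_eq.
    + apply (is_derive_comp sin th); [apply is_derive_Reals, derivable_pt_lim_sin | apply hth].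
    + unfold scal; simpl; unfold mult; simpl. ring.
  - now apply is_derive_sin_substitution.
Qed.
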